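(* Let $R$ be a commutative associative unital ring and $B$ a central $R$-algebra. Assume that $\beta$ is an invariant $R$-bilinear form on $B$ which is nonsingular and satisfies $\beta(B,B)=R$, and that the $R$-module $\mathbf{IBF}_R(B)$ is projective. Then $(B,\beta)$ satisfies the IBF-principle, i.e. the map $\bar\beta\colon\mathbf{IBF}_R(B)\to R$, $\overline{a\otimes b}\mapsto\beta(a,b)$, is an isomorphism of $R$-modules.
   Context: An $R$-algebra is an $R$-module with an $R$-bilinear product (no identities assumed). $\beta$ is invariant if $\beta(ab,c)=\beta(a,bc)=\beta(b,ca)$ for all $a,b,c\in B$; nonsingular if $b\mapsto\beta(b,-)$ is a bijection $B\to\mathrm{Hom}_R(B,R)$. $\beta(B,B)$ denotes the $R$-span of the values $\beta(a,b)$. The centroid is $\mathrm{Cent}_R(B)=\{\chi\in\mathrm{End}_R(B):\chi(ab)=a\chi(b)=\chi(a)b\ \forall a,b\}$, and $B$ is central if the map $R\to\mathrm{Cent}_R(B)$, $r\mapsto(b\mapsto rb)$, is an isomorphism. $\mathbf{IBF}_R(B)$ is the quotient of $B\otimes_R B$ by the $R$-submodule spanned by all $ab\otimes c-a\otimes bc$ and $ab\otimes c-b\otimes ca$, and $\overline{a\otimes b}$ denotes the class of $a\otimes b$. *)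

From HB Require Import structures.
From Stdlib Require Import ClassicalEpsilon.
From mathcomp Require Import all_boot all_algebra generic_quotient.
From mathcomp.multinomials Require Import freeg.

Set Implicit Arguments.
Unset Strict Implicit.
Unset Printing Implicit Defensive.

Import GRing.Theory.
Local Open Scope ring_scope.
Local Open Scope quotient_scope.

Definition pbool (P : Prop) : bool :=
  if excluded_middle_informative P then true else false.

Lemma pboolP (P : Prop) : reflect P (pbool P).
Proof. by rewrite /pbool; case: excluded_middle_informative => h; constructor. Qed.

Definition is_submodule (R : nzRingType) (V : lmodType R) (P : V -> Prop) :=
  P 0 /\ forall (r : R) (u v : V), P u -> P v -> P (r *: u + v).

Definition span_mod (R : nzRingType) (V : lmodType R) (G : V -> Prop) (x : V) : Prop :=
  forall P : V -> Prop, is_submodule P -> (forall g, G g -> P g) -> P x.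

Section ModQuotient.
Variables (R : nzRingType) (V : lmodType R) (G : V -> Prop).

Definition spanb : pred V := fun x => pbool (span_mod G x).

Lemma spanbP x : reflect (span_mod G x) (spanb x).
Proof. exact: pboolP. Qed.

Lemma spanb_submod : submod_closed spanb.
Proof.
split.
  by apply/spanbP => P [P0 _] _.
move=> r u v /spanbP hu /spanbP hv; apply/spanbP => P hP hG.
by case: (hP) => _ hD; apply: hD; [apply: hu | apply: hv].
Qed.

HB.instance Definition _ := GRing.isSubmodClosed.Build R V spanb spanb_submod.

Definition modq_equiv (x y : V) := (x - y) \in spanb.

Lemma modq_refl (x : V) : modq_equiv x x.
Proof. by rewrite /modq_equiv subrr rpred0. Qed.
Lemma modq_sym (x y : V) : modq_equiv x y = modq_equiv y x.
Proof. by rewrite /modq_equiv -opprB rpredN. Qed.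
Lemma modq_trans (y x z : V) : modq_equiv x y -> modq_equiv y z -> modq_equiv x z.
Proof. by rewrite /modq_equiv => h1 h2; rewrite -[x](addrNK y) -addrA rpredD. Qed.

Lemma modq_equiv_is_equiv : equiv_class_of modq_equiv.
Proof. split; [exact: modq_refl | exact: modq_sym | exact: modq_trans]. Qed.

Canonical modq_equiv_equiv := EquivRelPack modq_equiv_is_equiv.
Canonical modq_equiv_encModRel := defaultEncModRel modq_equiv.

Definition modq := {eq_quot modq_equiv}.
HB.instance Definition _ : EqQuotient V modq_equiv modq := EqQuotient.on modq.
HB.instance Definition _ := Choice.on modq.

Lemma modqBE x y : (x - y \in spanb) = (x == y %[mod modq]).
Proof. by rewrite piE. Qed.

Definition mq_zero : modq := lift_cst modq 0.
Definition mq_add := lift_op2 modq +%R.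
Definition mq_opp := lift_op1 modq -%R.
Fact mq_scale_key : unit. Proof. by []. Qed.
Definition mq_scale : R -> modq -> modq :=
  locked_with mq_scale_key (fun r (x : modq) => \pi_modq (r *: repr x)).
Canonical mq_scale_unlockable := [unlockable fun mq_scale].

Canonical mq_pi_zero_morph := PiConst mq_zero.

Lemma mq_pi_opp : {morph \pi_modq : x / - x >-> mq_opp x}.
Proof.
move=> x; unlock mq_opp; apply/eqP; rewrite piE /modq_equiv.
by rewrite -opprD rpredN modqBE reprK.
Qed.
Canonical mq_pi_opp_morph := PiMorph1 mq_pi_opp.

Lemma mq_pi_add : {morph \pi_modq : x y / x + y >-> mq_add x y}.
Proof.
move=> x y /=; unlock mq_add; apply/eqP; rewrite piE /modq_equiv.
rewrite opprD addrACA rpredD //.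
  by rewrite modqBE reprK.
by rewrite modqBE reprK.
Qed.
Canonical mq_pi_add_morph := PiMorph2 mq_pi_add.

Lemma mq_pi_scale r : {morph \pi_modq : x / r *: x >-> mq_scale r x}.
Proof.
move=> x; rewrite [mq_scale]unlock; apply/eqP; rewrite piE /modq_equiv.
by rewrite -scalerBr rpredZ // modqBE reprK.
Qed.

Lemma mq_addA : associative mq_add.
Proof. by move=> x y z; rewrite -[x]reprK -[y]reprK -[z]reprK !piE addrA. Qed.
Lemma mq_addC : commutative mq_add.
Proof. by move=> x y; rewrite -[x]reprK -[y]reprK !piE addrC. Qed.
Lemma mq_add0 : left_id mq_zero mq_add.
Proof. by move=> x; rewrite -[x]reprK !piE add0r. Qed.
Lemma mq_addN : left_inverse mq_zero mq_opp mq_add.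
Proof. by move=> x; rewrite -[x]reprK !piE addNr. Qed.

HB.instance Definition _ := GRing.isZmodule.Build modq mq_addA mq_addC mq_add0 mq_addN.

Lemma mq_scaleE r (v : V) : mq_scale r (\pi_modq v) = \pi_modq (r *: v).
Proof. by rewrite mq_pi_scale. Qed.

Lemma mq_scaleA a b (x : modq) : mq_scale a (mq_scale b x) = mq_scale (a * b) x.
Proof. by elim/quotW: x => v; rewrite !mq_scaleE scalerA. Qed.
Lemma mq_scale1 (x : modq) : mq_scale 1 x = x.
Proof. by elim/quotW: x => v; rewrite !mq_scaleE scale1r. Qed.
Lemma mq_scaleDr a (x y : modq) : mq_scale a (x + y) = mq_scale a x + mq_scale a y.
Proof.
elim/quotW: x => v; elim/quotW: y => w.
have -> : \pi_modq v + \pi_modq w = \pi_modq (v + w) :> modq by rewrite mq_pi_add.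
by rewrite !mq_scaleE scalerDr mq_pi_add.
Qed.
Lemma mq_scaleDl (x : modq) a b : mq_scale (a + b) x = mq_scale a x + mq_scale b x.
Proof. by elim/quotW: x => v; rewrite !mq_scaleE scalerDl mq_pi_add. Qed.

HB.instance Definition _ := GRing.Zmodule_isLmodule.Build R modq
  mq_scaleA mq_scale1 mq_scaleDr mq_scaleDl.

End ModQuotient.

Section Algebra.
Variables (R : comNzRingType) (B : lmodType R).

Definition bilinear_map (M : lmodType R) (f : B -> B -> M) : Prop :=
  (forall a, linear (f a)) /\ (forall b, linear (fun a => f a b)).

Variable mul : B -> B -> B.

Definition invariant_form (beta : B -> B -> R^o) : Prop :=
  forall a b c, beta (mul a b) c = beta a (mul b c) /\
                beta a (mul b c) = beta b (mul c a).

(* b |-> beta(b,-) is a bijection B -> Hom_R(B,R) *)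
Definition nonsingular_form (beta : B -> B -> R^o) : Prop :=
  (forall b1 b2, (forall x, beta b1 x = beta b2 x) -> b1 = b2) /\
  (forall f : {linear B -> R^o}, exists b, forall x, beta b x = f x).

(* beta(B,B) = R : the R-span of the values of beta is all of R *)
Definition form_values_span_R (beta : B -> B -> R^o) : Prop :=
  forall r : R, exists s : seq (R * (B * B)),
    r = \sum_(t <- s) t.1 * beta t.2.1 t.2.2.

Definition in_centroid (chi : B -> B) : Prop :=
  linear chi /\ forall a b, chi (mul a b) = mul a (chi b) /\ chi (mul a b) = mul (chi a) b.

(* B is central: r |-> (b |-> r b) is an isomorphism R -> Cent_R(B) *)
Definition central_algebra : Prop :=
  (forall r1 r2 : R, (forall b : B, r1 *: b = r2 *: b) -> r1 = r2) /\
  (forall chi, in_centroid chi -> exists r : R, forall b, chi b = r *: b).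

(* the free R-module on B x B; x (x) y is represented by the generator (x,y) *)
Definition freeBB := {freeg (B * B)%type / R}.
Definition gen (x y : B) : freeBB := << (x, y) >>.

(* relations: R-bilinearity (giving B (x)_R B) and invariance *)
Definition ibf_rel (u : freeBB) : Prop :=
  (exists r x x' y, u = gen (r *: x + x') y - (r *: gen x y + gen x' y)) \/
  (exists r x y y', u = gen x (r *: y + y') - (r *: gen x y + gen x y')) \/
  (exists a b c, u = gen (mul a b) c - gen a (mul b c)) \/
  (exists a b c, u = gen (mul a b) c - gen b (mul c a)).

(* IBF_R(B) = (B (x)_R B) / < ab(x)c - a(x)bc, ab(x)c - b(x)ca > *)
Definition IBF : lmodType R := modq ibf_rel.

Definition ibf_class (x y : B) : IBF := \pi_(modq ibf_rel) (gen x y).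

Definition ibf_beta (beta : B -> B -> R^o) (z : IBF) : R :=
  fglift (fun p : B * B => beta p.1 p.2) (repr z).

End Algebra.

Arguments IBF {R B} mul.
Arguments ibf_class {R B} mul x y.
Arguments ibf_beta {R B} mul beta z.
Arguments ibf_rel {R B} mul u.
Arguments in_centroid {R B} mul chi.
Arguments central_algebra {R B} mul.
Arguments invariant_form {R B} mul beta.

Definition projective_module (R : comNzRingType) (P : lmodType R) : Prop :=
  forall (M N : lmodType R) (g : {linear M -> N}) (f : {linear P -> N}),
    (forall n, exists m, g m = n) ->
    exists h : {linear P -> M}, forall p, g (h p) = f p.

(** Linearity of [beta] and
    its invariance say precisely that [beta] kills the relations defining
    [IBF_R(B)], so [ibf_beta] is a well-defined linear map, and it is onto
    because [beta(B,B) = R].  For injectivity, let [phi] be any linear form on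
    [IBF_R(B)].  For each [a], the form [phi (a (x) -)] is represented, by
    nonsingularity, as [beta (chi a) -]; invariance of [beta] and the relations
    of [IBF_R(B)] make [chi] an element of the centroid, hence a scalar [r]
    since [B] is central, and then [phi = r * ibf_beta].  So every linear form
    vanishes on the kernel of [ibf_beta]; as [IBF_R(B)] is projective, its
    linear forms separate points, and the kernel is zero. *)

From Stdlib Require Import ClassicalEpsilon.
From HB Require Import structures.
From mathcomp Require Import all_boot all_algebra generic_quotient.
From mathcomp.multinomials Require Import freeg.

Set Implicit Arguments.
Unset Strict Implicit.
Unset Printing Implicit Defensive.

Import GRing.Theory.
Local Open Scope ring_scope.
Local Open Scope quotient_scope.

Section LinearOf.
Variables (R : comNzRingType) (U V : lmodType R) (f : U -> V).
Definition lin_of of linear f := f.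
Variable hf : linear f.
HB.instance Definition _ := GRing.isLinear.Build R U V *:%R (lin_of hf) hf.
End LinearOf.

Lemma inj_surj_bijective (A B : Type) (f : A -> B) :
  injective f -> (forall y, exists x, f x = y) -> bijective f.
Proof.
move=> f_inj f_surj.
pose g y := proj1_sig (constructive_indefinite_description _ (f_surj y)).
have gK : cancel g f := fun y => proj2_sig (constructive_indefinite_description _ (f_surj y)).
by exists g => // x; apply: f_inj; rewrite gK.
Qed.

Section FreegLinear.
Variables (R : comNzRingType) (K : choiceType).

Lemma freeg_ind (P : {freeg K / R} -> Prop) :
  P 0 -> (forall u v, P u -> P v -> P (u + v)) -> (forall k x, P << k *g x >>) ->
  forall D, P D.
Proof.
move=> P0 PD PU D; rewrite -(freeg_sumE D); elim: (dom D) => [|z s IH].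
  by rewrite big_nil.
by rewrite big_cons; apply: PD.
Qed.

Lemma freegZU c k x : c *: << k *g x >> = << (c * k) *g x >> :> {freeg K / R}.
Proof. by apply/eqP/freeg_eqP => y; rewrite coeffZ !coeffU mulrA. Qed.

Lemma freegU_scale k x : << k *g x >> = k *: << x >> :> {freeg K / R}.
Proof. by rewrite freegZU mulr1. Qed.

Section Lift.
Variables (M : lmodType R) (f : K -> M).

HB.instance Definition _ :=
  GRing.isZmodMorphism.Build {freeg K / R} M (fglift f) (lift_is_additive f).

Lemma fglift_is_scalable : scalable (fglift f).
Proof.
move=> c; elim/freeg_ind => [|u v IHu IHv|k x].
- by rewrite !(scaler0, raddf0).
- by rewrite !(scalerDr, raddfD) /= IHu IHv.
- by rewrite freegZU !liftU scalerA.
Qed.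

HB.instance Definition _ :=
  GRing.isScalable.Build R {freeg K / R} M *:%R (fglift f) fglift_is_scalable.

End Lift.

Lemma freeg_linear_eq (M : lmodType R) (f g : {linear {freeg K / R} -> M}) :
  (forall x, f << x >> = g << x >>) -> f =1 g.
Proof.
move=> fg; elim/freeg_ind => [|u v IHu IHv|k x].
- by rewrite !raddf0.
- by rewrite !raddfD /= IHu IHv.
- by rewrite freegU_scale !linearZ fg.
Qed.

End FreegLinear.

(* Coordinates in a free module through which the identity of [P] lifts. *)
Lemma projective_torsionless (R : comNzRingType) (P : lmodType R) :
  projective_module P ->
  forall z : P, (forall phi : {linear P -> R^o}, phi z = 0) -> z = 0.
Proof.
move=> P_proj z z_null.
have lift_surj (p : P) : exists u, fglift idfun u = p.
  by exists << p >>; rewrite liftU scale1r.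
have [h hK] := P_proj _ _ (fglift idfun) idfun lift_surj.
have coeff_h_lin q : linear (fun w : P => coeff q (h w) : R^o).
  by move=> c u v; rewrite linearP coeffD coeffZ.
have hz0 : h z = 0.
  by apply/eqP/freeg_eqP => q; rewrite coeff0; apply: (z_null (lin_of (coeff_h_lin q))).
by rewrite -[z]hK hz0 raddf0.
Qed.

Section ModQuotient.
Variables (R : comNzRingType) (V : lmodType R) (G : V -> Prop).

Definition modq_proj : V -> modq G := \pi_(modq G).

Lemma modq_proj_is_linear : linear modq_proj.
Proof. by move=> r u v; rewrite /modq_proj mq_pi_add mq_pi_scale. Qed.

HB.instance Definition _ :=
  GRing.isLinear.Build R V (modq G) *:%R modq_proj modq_proj_is_linear.

Lemma modq_projK (z : modq G) : modq_proj (repr z) = z.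
Proof. exact: reprK. Qed.

Lemma modq_proj_eq u v : G (u - v) -> modq_proj u = modq_proj v.
Proof.
move=> uv_rel; apply/eqP; rewrite -subr_eq0 -raddfB -(raddf0 modq_proj).
by rewrite /modq_proj -modqBE subr0; apply/spanbP => P _; apply.
Qed.

Lemma linear_span_mod0 (M : lmodType R) (f : {linear V -> M}) :
  (forall g, G g -> f g = 0) -> forall u, span_mod G u -> f u = 0.
Proof.
move=> fG u u_span; apply: (u_span (fun v => f v = 0)); last exact: fG.
split=> [|r a b fa fb]; first exact: raddf0.
by rewrite linearP fa fb scaler0 addr0.
Qed.

Lemma linear_repr_modq (M : lmodType R) (f : {linear V -> M}) :
  (forall g, G g -> f g = 0) -> forall u, f (repr (modq_proj u)) = f u.
Proof.
move=> fG u; apply/eqP; rewrite -subr_eq0 -raddfB; apply/eqP.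
apply: (linear_span_mod0 fG); apply/spanbP.
by have := modqBE G (repr (modq_proj u)) u; rewrite reprK eqxx.
Qed.

End ModQuotient.

Section IBFClass.
Variables (R : comNzRingType) (B : lmodType R) (mul : B -> B -> B).

Local Notation class := (ibf_class mul).

Lemma ibf_classE x y : class x y = modq_proj (ibf_rel mul) (gen x y).
Proof. by []. Qed.

Lemma ibf_classPl r x x' y : class (r *: x + x') y = r *: class x y + class x' y.
Proof.
rewrite !ibf_classE -linearP; apply: modq_proj_eq.
by left; exists r, x, x', y.
Qed.

Lemma ibf_classPr r x y y' : class x (r *: y + y') = r *: class x y + class x y'.
Proof.
rewrite !ibf_classE -linearP; apply: modq_proj_eq.
by right; left; exists r, x, y, y'.
Qed.

Lemma ibf_class_shift a b c : class (mul a b) c = class a (mul b c).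
Proof. by apply: modq_proj_eq; right; right; left; exists a, b, c. Qed.

Lemma ibf_class_cycle a b c : class (mul a b) c = class b (mul c a).
Proof. by apply: modq_proj_eq; right; right; right; exists a, b, c. Qed.

Lemma ibf_linear_eq (M : lmodType R) (f g : {linear IBF mul -> M}) :
  (forall x y, f (class x y) = g (class x y)) -> f =1 g.
Proof.
move=> fg z; rewrite -(modq_projK z).
have fg_free : f \o modq_proj (ibf_rel mul) =1 g \o modq_proj (ibf_rel mul).
  by apply: freeg_linear_eq => -[x y]; apply: fg.
exact: fg_free.
Qed.

End IBFClass.

Section IBFBeta.
Variables (R : comNzRingType) (B : lmodType R) (mul : B -> B -> B) (beta : B -> B -> R^o).
Hypotheses (beta_bilin : bilinear_map beta) (beta_inv : invariant_form mul beta).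

Local Notation class := (ibf_class mul).
Local Notation ibf_beta := (ibf_beta mul beta).

Definition beta_free : freeBB B -> R^o := fglift (fun p : B * B => beta p.1 p.2 : R^o).
HB.instance Definition _ := GRing.Linear.on beta_free.

Lemma beta_free_gen x y : beta_free (gen x y) = beta x y.
Proof. by rewrite /beta_free /gen liftU scale1r. Qed.

Lemma beta_free_rel u : ibf_rel mul u -> beta_free u = 0.
Proof.
case=> [[r [x [x' [y ->]]]]|[[r [x [y [y' ->]]]]|[[a [b [c ->]]]|[a [b [c ->]]]]]];
  rewrite raddfB ?(raddfD beta_free) /= ?linearZ /= !beta_free_gen.
- by rewrite (beta_bilin.2 y) subrr.
- by rewrite (beta_bilin.1 x) subrr.
- by rewrite (beta_inv a b c).1 subrr.
- by rewrite (beta_inv a b c).1 (beta_inv a b c).2 subrr.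
Qed.

Lemma ibf_beta_proj u : ibf_beta (modq_proj (ibf_rel mul) u) = beta_free u.
Proof. exact: (linear_repr_modq beta_free_rel). Qed.

Lemma ibf_beta_class x y : ibf_beta (class x y) = beta x y.
Proof. by rewrite ibf_classE ibf_beta_proj beta_free_gen. Qed.

Lemma ibf_beta_linear : linear (ibf_beta : IBF mul -> R^o).
Proof.
move=> r z1 z2; rewrite -(modq_projK z1) -(modq_projK z2) -linearP !ibf_beta_proj.
exact: linearP.
Qed.

#[local] HB.instance Definition _ :=
  GRing.isLinear.Build R (IBF mul) R^o *:%R ibf_beta ibf_beta_linear.

Lemma ibf_beta_surjective :
  form_values_span_R beta -> forall s : R, exists z, ibf_beta z = s.
Proof.
move=> beta_span s; have [l ->] := beta_span s.
exists (\sum_(t <- l) t.1 *: class t.2.1 t.2.2).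
by rewrite raddf_sum; apply: eq_bigr => t _; rewrite /= linearZ /= ibf_beta_class.
Qed.

Section LinearForm.
Hypotheses (B_central : central_algebra mul) (beta_nonsing : nonsingular_form beta).
Variable phi : {linear IBF mul -> R^o}.

Lemma ibf_form_slice_linear a : linear (fun x => phi (class a x) : R^o).
Proof. by move=> r x y; rewrite ibf_classPr linearP. Qed.

Definition form_centroid (a : B) : B :=
  proj1_sig (constructive_indefinite_description _
    (beta_nonsing.2 (lin_of (ibf_form_slice_linear a)))).

Lemma form_centroidP a x : beta (form_centroid a) x = phi (class a x).
Proof.
exact: (proj2_sig (constructive_indefinite_description _
  (beta_nonsing.2 (lin_of (ibf_form_slice_linear a)))) x).
Qed.

Lemma form_centroid_in_centroid : in_centroid mul form_centroid.
Proof.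
split=> [r a a'|a b]; first apply: beta_nonsing.1 => x.
  by rewrite (beta_bilin.2 x) !form_centroidP ibf_classPl linearP.
split; apply: beta_nonsing.1 => c.
  rewrite form_centroidP ibf_class_cycle -form_centroidP.
  by rewrite -(beta_inv a _ c).2 (beta_inv a _ c).1.
by rewrite form_centroidP ibf_class_shift -form_centroidP (beta_inv _ b c).1.
Qed.

Lemma ibf_form_scalar : exists r : R, forall z, phi z = r * ibf_beta z.
Proof.
have [r form_centroidE] := B_central.2 _ form_centroid_in_centroid.
exists r; suff phiE : phi =1 r \*: (ibf_beta : IBF mul -> R^o) by [].
apply: ibf_linear_eq => x y /=.
have beta_scale : beta (r *: x) y = r * beta x y := linearZZ (lin_of (beta_bilin.2 y)) r x.
by rewrite -form_centroidP form_centroidE beta_scale ibf_beta_class.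
Qed.

End LinearForm.

Lemma ibf_beta_injective :
  central_algebra mul -> nonsingular_form beta -> projective_module (IBF mul) ->
  injective ibf_beta.
Proof.
move=> B_central beta_nonsing IBF_proj.
apply: (raddf_inj (f := ibf_beta : {linear IBF mul -> R^o})) => z z0.
apply: (projective_torsionless IBF_proj) => phi.
have [r ->] := ibf_form_scalar B_central beta_nonsing phi.
by rewrite z0 mulr0.
Qed.

End IBFBeta.

Theorem proposition3p9 (R : comNzRingType) (B : lmodType R) (mul : B -> B -> B)
    (beta : B -> B -> R^o) :
  bilinear_map mul ->
  central_algebra mul ->
  bilinear_map beta ->
  invariant_form mul beta ->
  nonsingular_form beta ->
  form_values_span_R beta ->
  projective_module (IBF mul) ->
  (forall x y : B, ibf_beta mul beta (ibf_class mul x y) = beta x y) /\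
  linear (ibf_beta mul beta : IBF mul -> R^o) /\
  bijective (ibf_beta mul beta).
Proof.
move=> _ B_central beta_bilin beta_inv beta_nonsing beta_span IBF_proj.
split; first exact: ibf_beta_class.
split; first exact: ibf_beta_linear.
apply: inj_surj_bijective.
  exact: ibf_beta_injective.
exact: ibf_beta_surjective.
Qed.
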